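(* For all integers $2\le n\le m$, \[ \gamma_{2t}(K_n\Box K_m)\le\gamma_{2t}(K_n\Box K_{m+1})\le\gamma_{2t}(K_n\Box K_m)+1 \] and \[ \gamma_{2t}(K_n\Box K_m)\le\gamma_{2t}(K_{n+1}\Box K_m)\le\gamma_{2t}(K_n\Box K_m)+2. \]
   Context: For a graph $G=(V,E)$, a set $S\subseteq V$ is a total $2$-dominating set if every vertex of $V$ (including those in $S$) is adjacent to at least $2$ vertices of $S$; $\gamma_{2t}(G)$ is the minimum cardinality of such a set. $G\Box H$ denotes the Cartesian product: vertex set $V(G)\times V(H)$, with $(u_1,v_1)\sim(u_2,v_2)$ iff either $u_1=u_2$ and $v_1\sim v_2$, or $v_1=v_2$ and $u_1\sim u_2$. $K_n$ is the complete graph on $n$ vertices. *)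

From mathcomp Require Import all_boot.
Set Implicit Arguments. Unset Strict Implicit. Unset Printing Implicit Defensive.

Definition total_k_dominating (T : finType) (e : rel T) (k : nat) (S : {set T}) : bool :=
  [forall v : T, k <= #|[set u in S | e v u]|].

(* gamma_{kt}(G): minimum cardinality of a total k-dominating set
   (defaults to #|T| if none exists; it always exists in the cases used here). *)
Definition gamma_kt (T : finType) (e : rel T) (k : nat) : nat :=
  \big[minn/#|T|]_(S : {set T} | total_k_dominating e k S) #|S|.

Definition gamma_2t (T : finType) (e : rel T) : nat := gamma_kt e 2.

Definition complete_rel (n : nat) : rel 'I_n := fun i j => i != j.

Definition cart_rel (A B : finType) (eA : rel A) (eB : rel B) : rel (A * B) :=
  fun x y => ((x.1 == y.1) && eB x.2 y.2) || ((x.2 == y.2) && eA x.1 y.1).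

Definition g2t_KK (n m : nat) : nat :=
  gamma_2t (@cart_rel (ordinal n) (ordinal m) (@complete_rel n) (@complete_rel m)).

From HB Require Import structures.
From mathcomp Require Import all_boot zify.
Set Implicit Arguments. Unset Strict Implicit. Unset Printing Implicit Defensive.

(* View K_n □ K_m as an n x m grid in which distinct cells of a row or of a
   column are adjacent, and let S be a minimum total 2-dominating set.
   Adding a column: if some column of S has at most t cells, duplicating that
   column keeps S total 2-dominating at a cost of at most t cells; otherwise
   |S| >= (t+1) m, and in the cases needed (t+1) m >= 2n, an upper bound for
   gamma_2t(K_n □ K_{m+1}) given by two full columns.
   Removing a column: a total 2-dominating set of K_n □ K_{m+1} smaller than
   gamma_2t(K_n □ K_m) has a column k with at most one cell, and some other
   column meets no row of that cell, since otherwise S contains a full row and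
   a cell in every other row, so |S| >= n + m.  Folding column k onto that
   column is injective on S and yields a total 2-dominating set of K_n □ K_m.
   The statement for K_{n+1} follows by symmetry of the Cartesian product. *)

HB.instance Definition _ := SemiGroup.isComLaw.Build nat minn minnA minnC.

Section MinimumTotalDomination.
Variables (T : finType) (e : rel T) (k : nat).

Lemma gamma_kt_le_card S : total_k_dominating e k S -> gamma_kt e k <= #|S|.
Proof. by move=> domS; rewrite /gamma_kt (bigD1 S) //= geq_minl. Qed.

Lemma gamma_kt_cases :
  gamma_kt e k = #|T| \/ exists2 S, total_k_dominating e k S & #|S| = gamma_kt e k.
Proof.
rewrite /gamma_kt; elim/big_ind: _ => [|x y|S domS]; first by left.
- by move=> ? ?; rewrite /minn; case: ifP.
- by right; exists S.
Qed.

Lemma gamma_kt_attained :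
  (exists S, total_k_dominating e k S) ->
  exists2 S, total_k_dominating e k S & #|S| = gamma_kt e k.
Proof.
move=> [S domS]; have [gammaT|//] := gamma_kt_cases; exists S => //.
by apply/eqP; rewrite eqn_leq gamma_kt_le_card // gammaT max_card.
Qed.

End MinimumTotalDomination.

Lemma leq_gamma_kt (T T' : finType) (e : rel T) (e' : rel T') k :
  #|T'| <= #|T| -> (forall S, total_k_dominating e k S -> gamma_kt e' k <= #|S|) ->
  gamma_kt e' k <= gamma_kt e k.
Proof.
move=> card_le le_dom; have [->|[S domS <-]] := gamma_kt_cases e k; last exact: le_dom.
have [->|[S' _ <-]] := gamma_kt_cases e' k; first exact: card_le.
exact: leq_trans (max_card _) card_le.
Qed.

Section Transfer.
Variables (T T' : finType) (e : rel T) (e' : rel T') (k : nat) (h : T -> T').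

(* The preimage of v' is taken in S when possible; injectivity on S then
   prevents its S-neighbours from collapsing onto it. *)
Lemma total_k_dominating_imset (S : {set T}) :
  irreflexive e -> (forall v', exists v, h v = v') ->
  (forall u w, e u w -> h u = h w \/ e' (h u) (h w)) ->
  {in S &, injective h} ->
  total_k_dominating e k S -> total_k_dominating e' k (h @: S).
Proof.
move=> irr_e h_onto h_edge h_inj /forallP domS; apply/forallP => v'.
have [v [<- vS]] : exists v, h v = v' /\ (v' \in h @: S -> v \in S).
  have [/imsetP[v vS ->]|notin] := boolP (v' \in h @: S); first by exists v.
  by have [v hv] := h_onto v'; exists v; split=> // /(negP notin).
apply: leq_trans (domS v) _; rewrite -(card_in_imset (f := h)); last first.
  by move=> u w /setIdP[uS _] /setIdP[wS _]; apply: h_inj.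
apply/subset_leq_card/subsetP => _ /imsetP[u /setIdP[uS vu] ->].
rewrite inE imset_f //=; have [hvu|//] := h_edge _ _ vu.
have vu_eq : v = u by apply: h_inj; rewrite // vS // hvu imset_f.
by rewrite vu_eq irr_e in vu.
Qed.

Lemma total_k_dominating_preimset (S : {set T'}) :
  (forall v w', e' (h v) w' -> exists2 u, e v u & h u = w') ->
  total_k_dominating e' k S -> total_k_dominating e k (h @^-1: S).
Proof.
move=> lift_edge /forallP domS; apply/forallP => v.
apply: leq_trans (domS (h v)) (leq_trans _ (leq_imset_card h _)).
apply/subset_leq_card/subsetP => w /setIdP[wS /lift_edge[u vu hu]].
by move: wS; rewrite -hu => huS; apply: imset_f; rewrite !inE huS vu.
Qed.

End Transfer.

Local Notation KK n m := (cart_rel (@complete_rel n) (@complete_rel m)).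

Lemma KK_irrefl n m : irreflexive (KK n m).
Proof. by move=> v; rewrite /cart_rel /complete_rel !eqxx. Qed.

Lemma g2t_KKC n m : g2t_KK n m = g2t_KK m n.
Proof.
suff le_swap a b : g2t_KK a b <= g2t_KK b a by apply/eqP; rewrite eqn_leq !le_swap.
apply: leq_gamma_kt => [|S domS]; first by rewrite !card_prod mulnC.
apply: leq_trans (gamma_kt_le_card _) (leq_imset_card (fun p => (p.2, p.1)) S).
apply: total_k_dominating_imset domS.
- exact: KK_irrefl.
- by move=> [x y]; exists (y, x).
- by move=> [x y] [x' y'] xy; right; rewrite /cart_rel orbC.
- by move=> [x y] [x' y'] _ _ [-> ->].
Qed.

Definition row n m (S : {set 'I_n * 'I_m}) (x : 'I_n) : {set 'I_m} :=
  [set y | (x, y) \in S].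
Definition col n m (S : {set 'I_n * 'I_m}) (y : 'I_m) : {set 'I_n} :=
  [set x | (x, y) \in S].

Section RowsColumns.
Variables (n m : nat) (S : {set 'I_n * 'I_m}).

Lemma card_pairs : #|S| = \sum_x \sum_(y | (x, y) \in S) 1.
Proof. by rewrite pair_big_dep -sum1_card; apply: eq_bigl => -[]. Qed.

Lemma card_rows : #|S| = \sum_x #|row S x|.
Proof. by rewrite card_pairs; apply: eq_bigr => x _; rewrite sum1dep_card. Qed.

Lemma card_cols : #|S| = \sum_y #|col S y|.
Proof.
rewrite card_pairs (exchange_big_dep xpredT) //.
by apply: eq_bigr => y _; rewrite sum1dep_card.
Qed.

Lemma leq_card_cols c : (forall y, c <= #|col S y|) -> c * m <= #|S|.
Proof.
by move=> colS; rewrite card_cols -{1}(card_ord m) mulnC -sum_nat_const leq_sum.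
Qed.

End RowsColumns.

Lemma total_2_dominating_two_cols n m (c1 c2 : 'I_m) :
  1 < n -> c1 != c2 -> total_k_dominating (KK n m) 2 (setX setT [set c1; c2]).
Proof.
move=> n_gt1 c12; apply/forallP => -[x y].
have [x' xx'] : exists x', x != x'.
  have /card_gt0P[x' x'x] : 0 < #|[set~ x]| by rewrite cardsC1 card_ord; lia.
  by exists x'; rewrite eq_sym -in_setC1.
have [c' c'S yc'] : exists2 c', (c' == c1) || (c' == c2) & y != c'.
  have [->|yc1] := eqVneq y c1; last by exists c1; rewrite ?eqxx.
  by exists c2; rewrite ?eqxx ?orbT.
apply/card_gt1P; rewrite /cart_rel /complete_rel.
have [yS|yNS] := boolP (y \in [set c1; c2]).
  exists (x, c'), (x', y); rewrite !inE /= in yS *.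
  by rewrite c'S yS !eqxx yc' xpair_eqE (negbTE xx').
move: yNS; rewrite !inE negb_or => /andP[yc1 yc2].
exists (x, c1), (x, c2); rewrite !inE /= !eqxx /=.
by rewrite xpair_eqE (negbTE c12) !andbF !orbF orbT.
Qed.

Lemma exists_total_2_dominating n m : 1 < n -> 1 < m ->
  exists2 S, total_k_dominating (KK n m) 2 S & #|S| = 2 * n.
Proof.
move=> n_gt1 m_gt1.
have /card_gt1P[c1 [c2 [_ _ c12]]] : 1 < #|[set: 'I_m]| by rewrite cardsT card_ord.
exists (setX setT [set c1; c2]); first exact: total_2_dominating_two_cols.
by rewrite cardsX cardsT card_ord cards2 c12 mulnC.
Qed.

Lemma g2t_KK_le_double n m : 1 < n -> 1 < m -> g2t_KK n m <= 2 * n.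
Proof.
by move=> n_gt1 m_gt1; have [S domS <-] := exists_total_2_dominating n_gt1 m_gt1;
  exact: gamma_kt_le_card.
Qed.

Lemma g2t_KK_attained n m : 1 < n -> 1 < m ->
  exists2 S, total_k_dominating (KK n m) 2 S & #|S| = g2t_KK n m.
Proof.
move=> n_gt1 m_gt1; apply: gamma_kt_attained.
by have [S domS _] := exists_total_2_dominating n_gt1 m_gt1; exists S.
Qed.

Definition colmap (A B B' : Type) (f : B -> B') (p : A * B) : A * B' := (p.1, f p.2).

Section ColumnMap.
Variables (n m m' : nat) (f : 'I_m' -> 'I_m).
Hypothesis f_onto : forall y, exists y', f y' = y.

Lemma col_colmap_preimset (S : {set 'I_n * 'I_m}) y :
  col (colmap f @^-1: S) y = col S (f y).
Proof. by apply/setP => x; rewrite !inE. Qed.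

Lemma total_k_dominating_colmap_imset k (S : {set 'I_n * 'I_m'}) :
  {in S &, injective (colmap f)} ->
  total_k_dominating (KK n m') k S -> total_k_dominating (KK n m) k (colmap f @: S).
Proof.
apply: total_k_dominating_imset; first exact: KK_irrefl.
- by move=> [x y]; have [y' <-] := f_onto y; exists (x, y').
- move=> [x y] [x' y']; rewrite /colmap /cart_rel /complete_rel /=.
  case/orP=> /andP[/eqP <- xy]; last by right; rewrite xy eqxx orbT.
  by have [->|fyy'] := eqVneq (f y) (f y'); [left | right; rewrite eqxx].
Qed.

Lemma total_k_dominating_colmap_preimset k (S : {set 'I_n * 'I_m}) :
  total_k_dominating (KK n m) k S -> total_k_dominating (KK n m') k (colmap f @^-1: S).
Proof.
apply: total_k_dominating_preimset => -[x y] [x' z]; rewrite /cart_rel /complete_rel /=.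
case/orP=> /andP[/eqP <- neq]; last by exists (x', y); rewrite //= eqxx neq orbT.
have [y' fy'] := f_onto z; exists (x, y'); rewrite /colmap ?fy' //= eqxx /=.
by rewrite andbF orbF; apply: contraNneq neq => ->; rewrite fy'.
Qed.

End ColumnMap.

Definition merge_col m (k : 'I_m.+1) (j : 'I_m) (y : 'I_m.+1) : 'I_m :=
  odflt j (unlift k y).

Section MergeColumn.
Variables (m : nat) (k : 'I_m.+1) (j : 'I_m).

Lemma merge_col_lift z : merge_col k j (lift k z) = z.
Proof. by rewrite /merge_col liftK. Qed.

Lemma merge_col_id : merge_col k j k = j.
Proof. by rewrite /merge_col unlift_none. Qed.

Lemma merge_col_onto y : exists y', merge_col k j y' = y.
Proof. by exists (lift k y); rewrite merge_col_lift. Qed.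

Lemma merge_col_inj n (S : {set 'I_n * 'I_m.+1}) :
  (forall x, (x, k) \in S -> (x, lift k j) \notin S) ->
  {in S &, injective (colmap (merge_col k j))}.
Proof.
move=> free_j [x y] [x' y'] xyS x'y'S; rewrite /colmap /= => -[eq_x eq_f]; subst x'.
move: xyS x'y'S eq_f.
case: (unliftP k y) => [z ->|->]; case: (unliftP k y') => [z' ->|->] //;
  rewrite ?(merge_col_lift, merge_col_id).
- by move=> _ _ ->.
- by move=> xzS /free_j /negP xjN zj; case: xjN; rewrite -zj.
- by move=> /free_j /negP xjN xz'S jz'; case: xjN; rewrite jz'.
Qed.

End MergeColumn.

Lemma card_dup_col n m (k : 'I_m) (S : {set 'I_n * 'I_m}) :
  #|colmap (merge_col ord_max k) @^-1: S| = #|S| + #|col S k|.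
Proof.
rewrite !card_cols big_ord_recr col_colmap_preimset merge_col_id; congr (_ + _).
apply: eq_bigr => y _; rewrite col_colmap_preimset.
have -> : widen_ord (leqnSn m) y = lift ord_max y.
  by apply: val_inj; exact: esym (lift_max y).
by rewrite merge_col_lift.
Qed.

Lemma g2t_KK_succ_le a b t : 1 < a -> 1 < b -> g2t_KK a b.+1 <= t.+1 * b ->
  g2t_KK a b.+1 <= g2t_KK a b + t.
Proof.
move=> a_gt1 b_gt1 ub; have [S domS <-] := g2t_KK_attained a_gt1 b_gt1.
have [/existsP[k colk]|/existsPn cols_big] := boolP [exists k, #|col S k| <= t].
  have dom' := total_k_dominating_colmap_preimset (merge_col_onto ord_max k) domS.
  by apply: leq_trans (gamma_kt_le_card dom') _; rewrite card_dup_col leq_add2l.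
apply: leq_trans ub (leq_trans (leq_card_cols _) (leq_addr _ _)) => y.
by rewrite ltnNge cols_big.
Qed.

Lemma row_nonempty a m (S : {set 'I_a * 'I_m}) (k : 'I_m) (x0 x : 'I_a) :
  total_k_dominating (KK a m) 2 S -> (forall x', (x', k) \in S -> x' = x0) ->
  x != x0 -> 0 < #|row S x|.
Proof.
move=> /forallP /(_ (x, k)) domS col_k xx0; rewrite card_gt0.
apply: contraTneq domS => row0.
rewrite -ltnNge ltnS -(cards1 (x0, k)); apply/subset_leq_card/subsetP => -[x' y].
rewrite !inE /cart_rel /complete_rel /=.
case/andP=> x'yS /orP[/andP[/eqP xx' _]|/andP[/eqP ky _]].
  have : y \in row S x by rewrite inE xx'.
  by rewrite row0 inE.
by rewrite -ky in x'yS *; rewrite (col_k _ x'yS).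
Qed.

Lemma exists_mergeable_col a b (S : {set 'I_a * 'I_b.+1}) (k : 'I_b.+1) :
  0 < b -> total_k_dominating (KK a b.+1) 2 S -> #|col S k| <= 1 -> #|S| < a + b ->
  exists j, forall x, (x, k) \in S -> (x, lift k j) \notin S.
Proof.
move=> b_gt0 domS colk small; have [col0|[x0 x0k]] := set_0Vmem (col S k).
  exists (Ordinal b_gt0) => x xk.
  have : x \in col S k by rewrite inE.
  by rewrite col0 inE.
have col_k x : (x, k) \in S -> x = x0.
  by move: colk => /card_le1_eqP eq_k xk; apply: eq_k => //; rewrite inE.
have [/existsP[j j_free]|/existsPn row_full] :=
  boolP [exists j, (x0, lift k j) \notin S].
  by exists j => x /col_k ->.
have row_x0 : #|row S x0| = b.+1.
  rewrite -[RHS](card_ord b.+1) -cardsT; apply: eq_card => y; rewrite !inE.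
  case: (unliftP k y) => [z ->|->]; first by rewrite (negPn (row_full z)).
  by rewrite inE in x0k.
suff : a + b <= #|S| by rewrite leqNgt small.
rewrite card_rows (bigD1 x0) //= row_x0.
have : \sum_(x < a | x != x0) 1 <= \sum_(x < a | x != x0) #|row S x|.
  by apply: leq_sum => x; exact: (row_nonempty domS col_k).
have -> : \sum_(x < a | x != x0) 1 = a.-1.
  rewrite sum1dep_card -[a in a.-1](card_ord a) -(cardsC1 x0).
  by apply: eq_card => x; rewrite !inE.
move/(leq_add (leqnn b.+1)); apply: leq_trans; have := ltn_ord x0; lia.
Qed.

Lemma g2t_KK_le_succ a b : 0 < b -> g2t_KK a b <= 2 * b.+1 -> g2t_KK a b <= a + b ->
  g2t_KK a b <= g2t_KK a b.+1.
Proof.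
move=> b_gt0 ub2 ub_ab; apply: leq_gamma_kt => [|S domS].
  by rewrite !card_prod !card_ord leq_mul2l leqnSn orbT.
have [//|small] := leqP (g2t_KK a b) #|S|.
have [k colk] : exists k, #|col S k| <= 1.
  apply/existsP; apply: contraTT small => /existsPn cols2; rewrite -leqNgt.
  by apply: leq_trans ub2 (leq_card_cols _) => y; rewrite ltnNge cols2.
have [j free_j] := exists_mergeable_col b_gt0 domS colk (leq_trans small ub_ab).
have dom' := total_k_dominating_colmap_imset (merge_col_onto k j)
  (merge_col_inj free_j) domS.
by have := leq_trans (gamma_kt_le_card dom') (leq_imset_card _ _); rewrite leqNgt small.
Qed.

Theorem lemma5 (n m : nat) (h2n : 2 <= n) (hnm : n <= m) :
  (g2t_KK n m <= g2t_KK n m.+1 <= g2t_KK n m + 1) /\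
  (g2t_KK n m <= g2t_KK n.+1 m <= g2t_KK n m + 2).
Proof.
have m_gt1 : 1 < m by lia.
have ub := g2t_KK_le_double h2n m_gt1.
have ub' : g2t_KK m n <= 2 * n by rewrite g2t_KKC.
have ub_m1 : g2t_KK n m.+1 <= 2 * n by apply: g2t_KK_le_double; lia.
have ub_n1 : g2t_KK m n.+1 <= 2 * n.+1 by rewrite -g2t_KKC; apply: g2t_KK_le_double; lia.
split; apply/andP; split.
- by apply: g2t_KK_le_succ; lia.
- by apply: g2t_KK_succ_le => //; lia.
- by rewrite (g2t_KKC n.+1) (g2t_KKC n); apply: g2t_KK_le_succ; lia.
- by rewrite (g2t_KKC n.+1) (g2t_KKC n); apply: g2t_KK_succ_le => //; lia.
Qed.
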